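(* Let $\mathcal{R}^{rsc}$ be a rich single-crossing domain and $F:\mathcal{R}^{rsc}\to\mathbb{Z}$ strategy-proof. Then $F$ is monotone, $V^F$ is continuous, and $F$ is locally strategy-proof in range.
   Context: $\mathbb{Z}=[0,\infty)\times[0,1]$; $(t',q')<(t'',q'')$ means $t'<t''$, $q'<q''$; $x\le y$ means $x=y$ or $x<y$; $\square(z)=\{x:x\le z\}$. A classical preference is a complete transitive relation $R$ on $\mathbb{Z}$ (strict part $P$, indifference $I$) strictly decreasing in $t$ for fixed $q$, strictly increasing in $q$ for fixed $t$, with closed upper and lower contour sets. Distinct classical preferences satisfy single-crossing if any indifference set of one meets any indifference set of the other in at most one point. A rich single-crossing domain $\mathcal{R}^{rsc}$ is a set of pairwise single-crossing classical preferences such that for all $x'<x''$ some member is indifferent between them. For distinct members, $R'\prec R''$ means $\square(z)\cap\{x:xR''z\}\subseteq\square(z)\cap\{x:xR'z\}$ for all $z$; $\prec$ is a linear order, $\mathcal{R}^{rsc}$ has the order topology. A mechanism $F:\mathcal{R}^{rsc}\to\mathbb{Z}$ with range $Rn(F)$ is strategy-proof if $F(R')R'F(R'')$ for all $R',R''$; monotone if $R'\prec R''$ implies $F(R')\le F(R'')$. $V^F(R)=\{z:zIF(R)\}$ is continuous if for every $R$ and every monotone sequence $R^n\to R$ (i.e. $R^n\precsim R^{n+1}$ for all $n$ or $R^{n+1}\precsim R^n$ for all $n$), $F(R^n)$ converges and $\lim F(R^n)\,I\,F(R)$. $Rn(F)$ is ordered if any two distinct elements $x',x''$ satisfy $x'<x''$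 or $x''<x'$. For ordered $Rn(F)$, two elements $x'<x''$ of $Rn(F)$ are adjacent if no $z\in Rn(F)$ satisfies $x'<z<x''$. $F$ is locally strategy-proof in range if $Rn(F)$ is ordered and for all $R',R''$ with $F(R'),F(R'')$ adjacent, $F(R')R'F(R'')$ and $F(R'')R''F(R')$. *)

From Stdlib Require Import Reals.
From Coquelicot Require Import Coquelicot.
Open Scope R_scope.

(* Points of Z = [0,oo) x [0,1]; first component t (money), second q. *)
Definition pt := (R * R)%type.
Definition inZ (x : pt) : Prop := 0 <= fst x /\ 0 <= snd x <= 1.

Definition ltZ (x y : pt) : Prop := fst x < fst y /\ snd x < snd y.
Definition leZ (x y : pt) : Prop := x = y \/ ltZ x y.
Definition box (z : pt) (x : pt) : Prop := inZ x /\ leZ x z.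

(* A (weak) preference relation: Rel x y means "x is weakly preferred to y". *)
Definition Pref := pt -> pt -> Prop.
Definition Pstrict (Rl : Pref) (x y : pt) : Prop := Rl x y /\ ~ Rl y x.
Definition Indiff (Rl : Pref) (x y : pt) : Prop := Rl x y /\ Rl y x.

Definition classical (Rl : Pref) : Prop :=
  (forall x y, Rl x y -> inZ x /\ inZ y) /\
  (forall x y, inZ x -> inZ y -> Rl x y \/ Rl y x) /\
  (forall x y z, Rl x y -> Rl y z -> Rl x z) /\
  (forall t t' q, 0 <= t -> t < t' -> 0 <= q <= 1 -> Pstrict Rl (t, q) (t', q)) /\
  (forall t q q', 0 <= t -> 0 <= q -> q < q' -> q' <= 1 -> Pstrict Rl (t, q') (t, q)) /\
  (forall z, inZ z -> closed (fun x => Rl x z) /\ closed (fun x => Rl z x)).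

Definition single_crossing (R1 R2 : Pref) : Prop :=
  forall z1 z2, inZ z1 -> inZ z2 ->
  forall x y, Indiff R1 x z1 -> Indiff R2 x z2 ->
              Indiff R1 y z1 -> Indiff R2 y z2 -> x = y.

Definition rich_single_crossing (D : Pref -> Prop) : Prop :=
  (forall Rl, D Rl -> classical Rl) /\
  (forall R1 R2, D R1 -> D R2 -> R1 <> R2 -> single_crossing R1 R2) /\
  (forall x1 x2, inZ x1 -> inZ x2 -> ltZ x1 x2 -> exists Rl, D Rl /\ Indiff Rl x1 x2).

Definition precD (R1 R2 : Pref) : Prop :=
  R1 <> R2 /\
  forall z, inZ z -> forall x, box z x -> R2 x z -> R1 x z.
Definition precsimD (R1 R2 : Pref) : Prop := precD R1 R2 \/ R1 = R2.

Definition mechanism (D : Pref -> Prop) (F : Pref -> pt) : Prop :=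
  forall Rl, D Rl -> inZ (F Rl).

Definition strategy_proof (D : Pref -> Prop) (F : Pref -> pt) : Prop :=
  forall R1 R2, D R1 -> D R2 -> R1 (F R1) (F R2).

Definition monotone (D : Pref -> Prop) (F : Pref -> pt) : Prop :=
  forall R1 R2, D R1 -> D R2 -> precD R1 R2 -> leZ (F R1) (F R2).

(* Convergence in the order topology of (D, precD): the sequence eventually
   enters every subbasic open ray containing the limit. *)
Definition order_converges (D : Pref -> Prop) (Rs : nat -> Pref) (Rl : Pref) : Prop :=
  (forall a, D a -> precD a Rl -> exists N, forall n, (N <= n)%nat -> precD a (Rs n)) /\
  (forall b, D b -> precD Rl b -> exists N, forall n, (N <= n)%nat -> precD (Rs n) b).

Definition monotone_seq (Rs : nat -> Pref) : Prop :=
  (forall n, precsimD (Rs n) (Rs (S n))) \/ (forall n, precsimD (Rs (S n)) (Rs n)).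

Definition VF_continuous (D : Pref -> Prop) (F : Pref -> pt) : Prop :=
  forall Rl, D Rl ->
  forall Rs : nat -> Pref, (forall n, D (Rs n)) -> monotone_seq Rs ->
    order_converges D Rs Rl ->
    exists l : pt, filterlim (fun n => F (Rs n)) eventually (locally l) /\
                   Indiff Rl l (F Rl).

Definition in_range (D : Pref -> Prop) (F : Pref -> pt) (x : pt) : Prop :=
  exists Rl, D Rl /\ F Rl = x.

Definition ordered_range (D : Pref -> Prop) (F : Pref -> pt) : Prop :=
  forall x y, in_range D F x -> in_range D F y -> x <> y -> ltZ x y \/ ltZ y x.

Definition adjacent (D : Pref -> Prop) (F : Pref -> pt) (x y : pt) : Prop :=
  in_range D F x /\ in_range D F y /\ ltZ x y /\
  ~ (exists z, in_range D F z /\ ltZ x z /\ ltZ z y).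

Definition locally_sp_in_range (D : Pref -> Prop) (F : Pref -> pt) : Prop :=
  ordered_range D F /\
  forall R1 R2, D R1 -> D R2 ->
    (adjacent D F (F R1) (F R2) \/ adjacent D F (F R2) (F R1)) ->
    R1 (F R1) (F R2) /\ R2 (F R2) (F R1).

(* Two outcomes of a strategy-proof mechanism are never ordered by dominance,
   so the range is ordered; and if [R1 < R2] received the larger outcome, the
   indifference of [R1] between the two outcomes would make [R2] strictly
   prefer [F R1], against strategy-proofness.  Along a monotone sequence of
   preferences the outcomes are coordinatewise monotone and bounded, hence
   converge; by closedness the limit is not better than [F R] for the limit
   preference [R], and it is not worse because every strict preference of [R]
   is eventually shared by the sequence.  This last fact needs the
   single-crossing order to be total, which follows from a connectedness
   argument on a continuous family of staircase paths. *)

From Stdlib Require Import Reals Lra Lia Classical.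
From Coquelicot Require Import Coquelicot.
Open Scope R_scope.
Set Bullet Behavior "Strict Subproofs".

Definition close (e : R) (a b : pt) : Prop :=
  Rabs (fst a - fst b) < e /\ Rabs (snd a - snd b) < e.

Lemma ball_close (x y : pt) (e : R) : ball x e y <-> close e y x.
Proof.
  unfold ball; simpl; unfold prod_ball, ball; simpl.
  unfold AbsRing_ball, abs, minus, plus, opp; simpl. unfold close, Rminus. tauto.
Qed.

Lemma close_le (e e' : R) (a b : pt) : e <= e' -> close e a b -> close e' a b.
Proof. unfold close; lra. Qed.

Lemma close_shift_fst (x : pt) (d e : R) : 0 <= d < e -> close e (fst x + d, snd x) x.
Proof.
  intro Hd. unfold close; simpl. rewrite Rminus_diag, Rabs_R0.
  replace (fst x + d - fst x) with d by ring. rewrite Rabs_pos_eq; lra.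
Qed.

Lemma close_shift_snd (x : pt) (d e : R) : 0 <= d < e -> close e (fst x, snd x + d) x.
Proof.
  intro Hd. unfold close; simpl. rewrite Rminus_diag, Rabs_R0.
  replace (snd x + d - snd x) with d by ring. rewrite Rabs_pos_eq; lra.
Qed.

Lemma closed_compl_near (P : pt -> Prop) (x : pt) :
  closed P -> ~ P x -> exists e, 0 < e /\ forall y, close e y x -> ~ P y.
Proof.
  intros HP Hx.
  assert (Hnear : locally x (fun y => ~ P y)) by (apply NNPP; intro H; apply Hx, HP, H).
  destruct Hnear as [e He]. exists e. split; [apply cond_pos|].
  intros y Hy. apply He, ball_close, Hy.
Qed.

Lemma closed_approx (P : pt -> Prop) (x : pt) :
  closed P -> (forall e, 0 < e -> exists y, close e y x /\ P y) -> P x.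
Proof.
  intros HP H. apply HP. intros [e He].
  destruct (H e (cond_pos e)) as [y [Hy Py]].
  exact (He y (proj2 (ball_close _ _ _) Hy) Py).
Qed.

Definition rel_open (a b : R) (U : R -> Prop) : Prop :=
  forall x, a <= x <= b -> U x ->
  exists d, 0 < d /\ forall y, a <= y <= b -> Rabs (y - x) < d -> U y.

(* The supremum of the initial segment covered by [U] lies in [U] or in [V];
   openness at that point forces an overlap. *)
Lemma segment_connected (a b : R) (U V : R -> Prop) :
  a <= b -> rel_open a b U -> rel_open a b V ->
  (forall x, a <= x <= b -> U x \/ V x) -> U a -> V b ->
  exists x, a <= x <= b /\ U x /\ V x.
Proof.
  intros Hab oU oV cover Ua Vb.
  apply NNPP. intro Hdisj.
  set (E := fun x => a <= x <= b /\ forall y, a <= y <= x -> U y).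
  assert (Ea : E a) by (split; [lra | intros y Hy; replace y with a by lra; exact Ua]).
  destruct (completeness E) as [s [Hub Hlub]].
  { exists b. intros x [Hx _]. lra. }
  { exists a. exact Ea. }
  assert (Has : a <= s) by exact (Hub a Ea).
  assert (Hsb : s <= b) by (apply Hlub; intros x [Hx _]; lra).
  assert (Happrox : forall d, 0 < d -> exists x, E x /\ s - d < x).
  { intros d Hd. apply NNPP. intro Hn.
    enough (s <= s - d) by lra.
    apply Hlub. intros x Ex. apply Rnot_lt_le. intro. apply Hn. exists x. auto. }
  destruct (cover s (conj Has Hsb)) as [Us | Vs].
  - destruct (oU s (conj Has Hsb) Us) as [d [Hd Hu]].
    destruct (Happrox d Hd) as [x [[Hx HUx] Hsx]].
    assert (Hxs : x <= s) by (apply Hub; split; auto).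
    set (x' := Rmin b (s + d / 2)).
    assert (Hx'b : x' <= b) by apply Rmin_l.
    assert (Hx'd : x' <= s + d / 2) by apply Rmin_r.
    assert (Ex' : E x').
    { split; [split; [unfold x'; apply Rmin_case; lra | exact Hx'b]|].
      intros y Hy. destruct (Rle_dec y x); [apply HUx; lra|].
      apply Hu; [lra|]. apply Rabs_def1; lra. }
    assert (Hx's : x' <= s) by exact (Hub x' Ex').
    destruct (Rle_dec b (s + d / 2)).
    + assert (s = b) by (unfold x' in Hx's; rewrite Rmin_left in Hx's; lra).
      subst s. apply Hdisj. exists b. split; [lra|auto].
    + unfold x' in Hx's. rewrite Rmin_right in Hx's; lra.
  - destruct (oV s (conj Has Hsb) Vs) as [d [Hd Hv]].
    destruct (Happrox d Hd) as [x [[Hx HUx] Hsx]].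
    assert (Hxs : x <= s) by (apply Hub; split; auto).
    apply Hdisj. exists x. repeat split; try lra.
    + apply HUx; lra.
    + apply Hv; [lra|]. apply Rabs_def1; lra.
Qed.

(** * Classical preferences *)

Definition dominates (x y : pt) : Prop := fst x <= fst y /\ snd y <= snd x.

Lemma ltZ_or_dominates (x y : pt) :
  ltZ x y \/ ltZ y x \/ dominates x y \/ dominates y x.
Proof.
  unfold ltZ, dominates.
  destruct (Rlt_le_dec (fst x) (fst y)); destruct (Rlt_le_dec (snd x) (snd y));
  destruct (Rlt_le_dec (fst y) (fst x)); destruct (Rlt_le_dec (snd y) (snd x)); lra.
Qed.

Section ClassicalPreference.
Variable Rl : Pref.
Hypothesis HR : classical Rl.

Lemma pref_inZ x y : Rl x y -> inZ x /\ inZ y.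
Proof. apply HR. Qed.

Lemma pref_total x y : inZ x -> inZ y -> Rl x y \/ Rl y x.
Proof. apply HR. Qed.

Lemma pref_trans x y z : Rl x y -> Rl y z -> Rl x z.
Proof. apply HR. Qed.

Lemma pref_refl x : inZ x -> Rl x x.
Proof. intro Hx. destruct (pref_total x x Hx Hx); auto. Qed.

Lemma pref_not x y : inZ x -> inZ y -> ~ Rl x y -> Rl y x.
Proof. intros Hx Hy Hn. destruct (pref_total x y Hx Hy); tauto. Qed.

Lemma closed_upper z : inZ z -> closed (fun x => Rl x z).
Proof. intro Hz. apply HR, Hz. Qed.

Lemma closed_lower z : inZ z -> closed (fun x => Rl z x).
Proof. intro Hz. apply HR, Hz. Qed.

Lemma strict_pref_trans_l x y z : Pstrict Rl x y -> Rl y z -> Pstrict Rl x z.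
Proof.
  intros [Hxy Hyx] Hyz. split; [exact (pref_trans _ _ _ Hxy Hyz)|].
  intro Hzx. exact (Hyx (pref_trans _ _ _ Hyz Hzx)).
Qed.

Lemma strict_pref_trans_r x y z : Rl x y -> Pstrict Rl y z -> Pstrict Rl x z.
Proof.
  intros Hxy [Hyz Hzy]. split; [exact (pref_trans _ _ _ Hxy Hyz)|].
  intro Hzx. exact (Hzy (pref_trans _ _ _ Hzx Hxy)).
Qed.

Lemma dominates_pref x y : inZ x -> inZ y -> dominates x y -> Rl x y.
Proof.
  destruct x as [a b], y as [c d]. unfold inZ, dominates; simpl.
  intros Hx Hy [Hac Hdb].
  destruct HR as [_ [_ [_ [Ht [Hq _]]]]].
  apply (pref_trans _ (a, d)).
  - destruct (Req_dec b d) as [->|]; [apply pref_refl; unfold inZ; simpl; lra|].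
    apply (Hq a d b); lra.
  - destruct (Req_dec a c) as [->|]; [apply pref_refl; unfold inZ; simpl; lra|].
    apply (Ht a c d); lra.
Qed.

Lemma dominates_strict x y : inZ x -> inZ y -> dominates x y -> x <> y -> Pstrict Rl x y.
Proof.
  destruct x as [a b], y as [c d]. unfold inZ, dominates; simpl.
  intros Hx Hy [Hac Hdb] Hne.
  destruct HR as [_ [_ [_ [Ht [Hq _]]]]].
  destruct (Req_dec a c) as [<-|Hac'].
  - assert (b <> d) by (intros <-; auto). apply (Hq a d b); lra.
  - apply (strict_pref_trans_r _ (a, d)); [|apply (Ht a c d); lra].
    apply dominates_pref; unfold inZ, dominates; simpl; lra.
Qed.

(* Interpose the point [m], slightly worse than [y] but not preferred to [z]:
   both [~ Rl z m] and [~ Rl m y] persist near [(y, z)] by closedness. *)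
Lemma strict_pref_stable y z : Pstrict Rl y z ->
  exists e, 0 < e /\ forall y' z', inZ y' -> inZ z' -> close e y' y -> close e z' z ->
    Pstrict Rl y' z'.
Proof.
  intros [Hyz Hzy].
  destruct (pref_inZ _ _ Hyz) as [Hy Hz].
  destruct (closed_compl_near _ y (closed_lower z Hz) Hzy) as [e1 [He1 Ho1]].
  set (m := (fst y + e1 / 2, snd y)).
  assert (Hm : inZ m) by (unfold m, inZ in *; simpl; lra).
  assert (Hzm : ~ Rl z m) by (apply Ho1, close_shift_fst; lra).
  assert (Hym : Pstrict Rl y m).
  { apply dominates_strict; auto; unfold m, dominates; simpl; [lra|].
    intro E. apply (f_equal fst) in E. simpl in E. lra. }
  destruct (closed_compl_near _ y (closed_lower m Hm) (proj2 Hym)) as [e2 [He2 Ho2]].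
  destruct (closed_compl_near _ z (closed_upper m Hm) Hzm) as [e3 [He3 Ho3]].
  exists (Rmin e2 e3). split; [apply Rmin_pos; auto|].
  intros y' z' Hy' Hz' Cy Cz.
  assert (Hmy' : ~ Rl m y') by (apply Ho2; apply (close_le _ _ _ _ (Rmin_l e2 e3) Cy)).
  assert (Hz'm : ~ Rl z' m) by (apply Ho3; apply (close_le _ _ _ _ (Rmin_r e2 e3) Cz)).
  apply (strict_pref_trans_r _ m); [apply pref_not; auto|].
  split; [apply pref_not; auto | exact Hz'm].
Qed.

End ClassicalPreference.

Definition cv_pt (u : nat -> pt) (l : pt) : Prop :=
  forall e, 0 < e -> exists N, forall n, (N <= n)%nat -> close e (u n) l.

Lemma cv_pt_filterlim (u : nat -> pt) (l : pt) :
  cv_pt u l -> filterlim u eventually (locally l).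
Proof.
  intros Hu. apply filterlim_locally. intros e.
  destruct (Hu e (cond_pos e)) as [N HN]. exists N. intros n Hn.
  apply ball_close, HN, Hn.
Qed.

Lemma cv_pt_of_coords (u : nat -> pt) (l1 l2 : R) :
  Un_cv (fun n => fst (u n)) l1 -> Un_cv (fun n => snd (u n)) l2 -> cv_pt u (l1, l2).
Proof.
  intros H1 H2 e He.
  destruct (H1 e He) as [N1 HN1]. destruct (H2 e He) as [N2 HN2].
  exists (max N1 N2). intros n Hn. split; [apply HN1 | apply HN2]; lia.
Qed.
(** * Staircase paths *)

Definition lerp (a b s : R) : R := a + s * (b - a).

Definition plerp (x y : pt) (s : R) : pt :=
  (lerp (fst x) (fst y) s, lerp (snd x) (snd y) s).

Lemma lerp_lt_compat a b c d s : 0 <= s <= 1 -> a < c -> b < d -> lerp a b s < lerp c d s.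
Proof.
  unfold lerp; intros Hs Hac Hbd.
  enough (0 < (1 - s) * (c - a) + s * (d - b)) by lra.
  destruct (Req_dec s 0) as [->|]; nra.
Qed.

Lemma plerp_inZ x y s : 0 <= s <= 1 -> inZ x -> inZ y -> inZ (plerp x y s).
Proof. unfold inZ, plerp, lerp; simpl; intros; split; nra. Qed.

Lemma plerp_ltZ x y x' y' s : 0 <= s <= 1 -> ltZ x x' -> ltZ y y' ->
  ltZ (plerp x y s) (plerp x' y' s).
Proof. unfold ltZ, plerp; simpl; intros; split; apply lerp_lt_compat; lra. Qed.

Lemma plerp_0 x y : plerp x y 0 = x.
Proof. destruct x; unfold plerp, lerp; simpl; f_equal; ring. Qed.

Lemma plerp_1 x y : plerp x y 1 = y.
Proof. destruct y; unfold plerp, lerp; simpl; f_equal; ring. Qed.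

Lemma lerp_lipschitz a b s s' : Rabs (lerp a b s' - lerp a b s) = Rabs (s' - s) * Rabs (b - a).
Proof. unfold lerp. rewrite <- Rabs_mult. f_equal. ring. Qed.

Lemma plerp_near x y s e : 0 < e ->
  exists d, 0 < d /\ forall s', Rabs (s' - s) < d -> close e (plerp x y s') (plerp x y s).
Proof.
  intro He. set (K := 1 + Rabs (fst y - fst x) + Rabs (snd y - snd x)).
  pose proof (Rabs_pos (fst y - fst x)). pose proof (Rabs_pos (snd y - snd x)).
  exists (e / K). split; [apply Rdiv_lt_0_compat; unfold K; lra|].
  intros s' Hs'. pose proof (Rabs_pos (s' - s)).
  assert (HK : Rabs (s' - s) * K < e).
  { apply (Rmult_lt_compat_r K) in Hs'; [|unfold K; lra].
    unfold Rdiv in Hs'. rewrite Rmult_assoc, Rinv_l, Rmult_1_r in Hs'; unfold K in *; lra. }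
  unfold close, plerp; simpl. rewrite !lerp_lipschitz. unfold K in HK.
  pose proof (Rmult_le_pos _ _ H1 H). pose proof (Rmult_le_pos _ _ H1 H0). split; nra.
Qed.

(* The staircase of [y < z] runs down the segment from [(t_y, q_z)] to [y]
   (for [l] in [0,1]) and then right to [(t_z, q_y)] (for [l] in [1,2]). *)
Definition staircase (y z : pt) (l : R) : pt :=
  (fst y + Rmax 0 (l - 1) * (fst z - fst y), snd y + Rmax 0 (1 - l) * (snd z - snd y)).

Lemma staircase_plerp y z y' z' l s :
  staircase (plerp y y' s) (plerp z z' s) l = plerp (staircase y z l) (staircase y' z' l) s.
Proof. unfold staircase, plerp, lerp; simpl; f_equal; ring. Qed.

Lemma Rmax0_lipschitz a b : Rabs (Rmax 0 a - Rmax 0 b) <= Rabs (a - b).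
Proof.
  unfold Rmax. destruct (Rle_dec 0 a), (Rle_dec 0 b); unfold Rabs; repeat destruct Rcase_abs; lra.
Qed.

Section Staircase.
Variables y z : pt.
Hypothesis Hy : inZ y.
Hypothesis Hz : inZ z.
Hypothesis Hyz : ltZ y z.

Lemma staircase_1 : staircase y z 1 = y.
Proof.
  destruct y. unfold staircase. replace (1 - 1) with 0 by ring.
  rewrite Rmax_left by lra. simpl. f_equal; ring.
Qed.

Lemma staircase_inZ l : 0 <= l <= 2 -> inZ (staircase y z l).
Proof.
  intro Hl. unfold staircase, Rmax, inZ, ltZ in *; simpl.
  destruct (Rle_dec 0 (l - 1)), (Rle_dec 0 (1 - l)); split; nra.
Qed.

Lemma staircase_ltZ l : 0 < l < 2 -> ltZ (staircase y z l) z.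
Proof.
  intro Hl. unfold staircase, Rmax, ltZ in *; simpl.
  destruct (Rle_dec 0 (l - 1)), (Rle_dec 0 (1 - l)); split; nra.
Qed.

Lemma staircase_strict (Rl : Pref) l l' : classical Rl -> 0 <= l < l' -> l' <= 2 ->
  Pstrict Rl (staircase y z l) (staircase y z l').
Proof.
  intros HR Hl Hl'.
  apply dominates_strict; auto; try (apply staircase_inZ; lra).
  - unfold dominates, staircase, Rmax, ltZ in *; simpl.
    destruct (Rle_dec 0 (l - 1)), (Rle_dec 0 (l' - 1)), (Rle_dec 0 (1 - l)),
      (Rle_dec 0 (1 - l')); split; nra.
  - unfold staircase, Rmax, ltZ in *. intro E. injection E; clear E; intros E2 E1.
    destruct (Rle_dec 0 (l - 1)), (Rle_dec 0 (l' - 1)), (Rle_dec 0 (1 - l)),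
      (Rle_dec 0 (1 - l')); nra.
Qed.

Lemma staircase_0_strict (Rl : Pref) : classical Rl -> Pstrict Rl (staircase y z 0) z.
Proof.
  intro HR. apply dominates_strict; auto; [apply staircase_inZ; lra| |].
  - unfold dominates, staircase, ltZ in *; simpl.
    rewrite (Rmax_left 0 (0 - 1)), (Rmax_right 0 (1 - 0)) by lra. split; lra.
  - unfold staircase, ltZ in *. rewrite (Rmax_left 0 (0 - 1)) by lra.
    intro E. apply (f_equal fst) in E. simpl in E. lra.
Qed.

Lemma staircase_2_strict (Rl : Pref) : classical Rl -> Pstrict Rl z (staircase y z 2).
Proof.
  intro HR. apply dominates_strict; auto; [apply staircase_inZ; lra| |].
  - unfold dominates, staircase, ltZ in *; simpl.
    rewrite (Rmax_right 0 (2 - 1)), (Rmax_left 0 (1 - 2)) by lra. split; lra.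
  - unfold staircase, ltZ in *. rewrite (Rmax_left 0 (1 - 2)) by lra.
    intro E. apply (f_equal snd) in E. simpl in E. lra.
Qed.

Lemma staircase_avoid (C : pt -> Prop) l : closed C -> ~ C (staircase y z l) ->
  exists d, 0 < d /\ forall l', Rabs (l' - l) < d -> ~ C (staircase y z l').
Proof.
  intros HC Hl.
  destruct (closed_compl_near _ _ HC Hl) as [e [He Ho]].
  set (K := fst z - fst y + (snd z - snd y)).
  assert (HK : 0 < K) by (unfold K, ltZ in *; lra).
  exists (e / K). split; [apply Rdiv_lt_0_compat; lra|].
  intros l' Hl'. apply Ho.
  assert (Hd : Rabs (l' - l) * K < e).
  { apply (Rmult_lt_compat_r K) in Hl'; [|lra].
    unfold Rdiv in Hl'. rewrite Rmult_assoc, Rinv_l, Rmult_1_r in Hl'; lra. }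
  pose proof (Rmax0_lipschitz (l' - 1) (l - 1)) as L1.
  pose proof (Rmax0_lipschitz (1 - l') (1 - l)) as L2.
  replace (l' - 1 - (l - 1)) with (l' - l) in L1 by ring.
  replace (1 - l' - (1 - l)) with (- (l' - l)) in L2 by ring. rewrite Rabs_Ropp in L2.
  unfold close, staircase, ltZ in *; simpl.
  split.
  - replace (_ - _) with ((Rmax 0 (l' - 1) - Rmax 0 (l - 1)) * (fst z - fst y)) by ring.
    rewrite Rabs_mult, (Rabs_pos_eq (fst z - fst y)) by lra.
    pose proof (Rabs_pos (Rmax 0 (l' - 1) - Rmax 0 (l - 1))). unfold K in Hd. nra.
  - replace (_ - _) with ((Rmax 0 (1 - l') - Rmax 0 (1 - l)) * (snd z - snd y)) by ring.
    rewrite Rabs_mult, (Rabs_pos_eq (snd z - snd y)) by lra.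
    pose proof (Rabs_pos (Rmax 0 (1 - l') - Rmax 0 (1 - l))). unfold K in Hd. nra.
Qed.

Lemma staircase_avoid_below (C : pt -> Prop) l : closed C -> ~ C (staircase y z l) ->
  0 < l -> exists l', 0 <= l' < l /\ ~ C (staircase y z l').
Proof.
  intros HC Hl Hl0. destruct (staircase_avoid C l HC Hl) as [d [Hd Ho]].
  exists (l - Rmin (d / 2) (l / 2)).
  assert (0 < Rmin (d / 2) (l / 2)) by (apply Rmin_pos; lra).
  pose proof (Rmin_l (d / 2) (l / 2)). pose proof (Rmin_r (d / 2) (l / 2)).
  split; [lra|]. apply Ho. rewrite Rabs_left; lra.
Qed.

Lemma staircase_avoid_above (C : pt -> Prop) l : closed C -> ~ C (staircase y z l) ->
  l < 2 -> exists l', l < l' <= 2 /\ ~ C (staircase y z l').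
Proof.
  intros HC Hl Hl2. destruct (staircase_avoid C l HC Hl) as [d [Hd Ho]].
  exists (l + Rmin (d / 2) ((2 - l) / 2)).
  assert (0 < Rmin (d / 2) ((2 - l) / 2)) by (apply Rmin_pos; lra).
  pose proof (Rmin_l (d / 2) ((2 - l) / 2)). pose proof (Rmin_r (d / 2) ((2 - l) / 2)).
  split; [lra|]. apply Ho. rewrite Rabs_pos_eq; lra.
Qed.

Lemma staircase_indiff (Rl : Pref) : classical Rl ->
  exists l, 0 < l < 2 /\ Indiff Rl (staircase y z l) z.
Proof.
  intro HR. apply NNPP. intro Hnone.
  destruct (segment_connected 0 2 (fun l => ~ Rl z (staircase y z l))
                                   (fun l => ~ Rl (staircase y z l) z))
    as [l [Hl [Ul Vl]]].
  - lra.
  - intros l _ Hl. destruct (staircase_avoid _ l (closed_lower Rl HR z Hz) Hl) as [d [Hd Ho]].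
    exists d. split; [exact Hd|]. intros l' _. apply Ho.
  - intros l _ Hl. destruct (staircase_avoid _ l (closed_upper Rl HR z Hz) Hl) as [d [Hd Ho]].
    exists d. split; [exact Hd|]. intros l' _. apply Ho.
  - intros l Hl.
    destruct (classic (Rl z (staircase y z l))) as [A|A]; [|left; exact A].
    destruct (classic (Rl (staircase y z l) z)) as [B|B]; [|right; exact B].
    destruct (Req_dec l 0) as [->|H0]; [exfalso; exact (proj2 (staircase_0_strict Rl HR) A)|].
    destruct (Req_dec l 2) as [->|H2]; [exfalso; exact (proj2 (staircase_2_strict Rl HR) B)|].
    exfalso. apply Hnone. exists l. split; [lra | split; assumption].
  - exact (proj2 (staircase_0_strict Rl HR)).
  - exact (proj2 (staircase_2_strict Rl HR)).
  - apply Ul, pref_not; auto. apply staircase_inZ; exact Hl.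
Qed.

End Staircase.

Section Homotopy.
Variables ya za yb zb : pt.
Hypotheses (Hya : inZ ya) (Hza : inZ za) (Hyza : ltZ ya za).
Hypotheses (Hyb : inZ yb) (Hzb : inZ zb) (Hyzb : ltZ yb zb).

(* Interpolating linearly between the pairs [ya < za] and [yb < zb] deforms
   one staircase into the other. *)
Let ys (s : R) : pt := plerp ya yb s.
Let zs (s : R) : pt := plerp za zb s.
Let path (s l : R) : pt := staircase (ys s) (zs s) l.

Let ys_inZ s : 0 <= s <= 1 -> inZ (ys s).
Proof. intro Hs. apply plerp_inZ; auto. Qed.

Let zs_inZ s : 0 <= s <= 1 -> inZ (zs s).
Proof. intro Hs. apply plerp_inZ; auto. Qed.

Let ys_ltZ s : 0 <= s <= 1 -> ltZ (ys s) (zs s).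
Proof. intro Hs. apply plerp_ltZ; auto. Qed.

Let path_inZ s l : 0 <= s <= 1 -> 0 <= l <= 2 -> inZ (path s l).
Proof. intros Hs Hl. apply staircase_inZ; auto. Qed.

Let path_strict (Rl : Pref) s l l' : classical Rl -> 0 <= s <= 1 -> 0 <= l < l' -> l' <= 2 ->
  Pstrict Rl (path s l) (path s l').
Proof. intros. apply staircase_strict; auto. Qed.

Let path_ltZ s l : 0 <= s <= 1 -> 0 < l < 2 -> ltZ (path s l) (zs s).
Proof. intros. apply staircase_ltZ; auto. Qed.

Definition separates (R1 R2 : Pref) (s : R) : Prop :=
  exists l, 0 <= l <= 2 /\ R1 (path s l) (zs s) /\ ~ R2 (path s l) (zs s).

Lemma separates_0 (R1 R2 : Pref) : R1 ya za -> ~ R2 ya za -> separates R1 R2 0.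
Proof.
  intros H H'. exists 1. split; [lra|].
  unfold path, ys, zs. rewrite !plerp_0, staircase_1 by auto. auto.
Qed.

Lemma separates_1 (R1 R2 : Pref) : R1 yb zb -> ~ R2 yb zb -> separates R1 R2 1.
Proof.
  intros H H'. exists 1. split; [lra|].
  unfold path, ys, zs. rewrite !plerp_1, staircase_1 by auto. auto.
Qed.

(* Moving slightly down the staircase makes [R1] strict while [R2] still
   rejects; both strict preferences then survive a small change of [s]. *)
Lemma separates_open (R1 R2 : Pref) : classical R1 -> classical R2 ->
  rel_open 0 1 (separates R1 R2).
Proof.
  intros HR1 HR2 s Hs [l [Hl [Hacc Hrej]]].
  assert (Hl0 : 0 < l).
  { destruct (Req_dec l 0) as [->|]; [|lra]. exfalso. apply Hrej.
    exact (proj1 (staircase_0_strict (ys s) (zs s) (ys_inZ s Hs) (zs_inZ s Hs) (ys_ltZ s Hs)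
                    R2 HR2)). }
  destruct (staircase_avoid_below (ys s) (zs s)) with (C := fun x => R2 x (zs s)) (l := l)
    as [l' [Hl' Hrej']];
    try solve [lra | auto using closed_upper].
  fold (path s l') in Hrej'.
  assert (Hs_acc : Pstrict R1 (path s l') (zs s)).
  { apply (strict_pref_trans_l _ HR1 _ (path s l)); auto. apply path_strict; auto; lra. }
  assert (Hs_rej : Pstrict R2 (zs s) (path s l')).
  { split; [|exact Hrej'].
    apply pref_not; auto. apply path_inZ; auto; lra. }
  destruct (strict_pref_stable R1 HR1 _ _ Hs_acc) as [e1 [He1 Ho1]].
  destruct (strict_pref_stable R2 HR2 _ _ Hs_rej) as [e2 [He2 Ho2]].
  set (e := Rmin e1 e2).
  assert (He : 0 < e) by (apply Rmin_pos; auto).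
  destruct (plerp_near (staircase ya za l') (staircase yb zb l') s e He) as [d1 [Hd1 Hp]].
  destruct (plerp_near za zb s e He) as [d2 [Hd2 Hz]].
  exists (Rmin d1 d2). split; [apply Rmin_pos; auto|].
  intros s' Hs' Hss'.
  pose proof (Rmin_l d1 d2). pose proof (Rmin_r d1 d2).
  assert (Cp : close e (path s' l') (path s l')).
  { unfold path, ys, zs. rewrite !staircase_plerp. apply Hp. lra. }
  assert (Cz : close e (zs s') (zs s)) by (apply Hz; lra).
  assert (Hp' : inZ (path s' l')) by (apply path_inZ; auto; lra).
  pose proof (zs_inZ s' Hs') as Hz'.
  exists l'. split; [lra|]. split.
  - apply (Ho1 (path s' l') (zs s')); auto; eapply close_le; eauto; apply Rmin_l.
  - apply (Ho2 (zs s') (path s' l')); auto; eapply close_le; eauto; apply Rmin_r.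
Qed.

Lemma separates_exclusive (R1 R2 : Pref) s : classical R1 -> classical R2 -> 0 <= s <= 1 ->
  separates R1 R2 s -> separates R2 R1 s -> False.
Proof.
  intros HR1 HR2 Hs [la [Hla [acc1 rej2]]] [lb [Hlb [acc2 rej1]]].
  destruct (Rlt_le_dec lb la) as [Hba|Hab].
  - apply rej1. apply (pref_trans _ HR1 _ (path s la)); auto.
    apply path_strict; auto; lra.
  - apply rej2. apply (pref_trans _ HR2 _ (path s lb)); auto.
    destruct (Req_dec la lb) as [<-|]; [apply pref_refl; auto|apply path_strict; auto; lra].
Qed.

Lemma separates_cover (R1 R2 : Pref) s : classical R1 -> classical R2 -> 0 <= s <= 1 ->
  (forall x, Indiff R1 x (zs s) -> Indiff R2 x (zs s) -> x = zs s) ->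
  separates R1 R2 s \/ separates R2 R1 s.
Proof.
  intros HR1 HR2 Hs Hcross.
  destruct (staircase_indiff (ys s) (zs s)) with (Rl := R1) as [l [Hl [acc1 back1]]]; auto.
  fold (path s l) in acc1, back1.
  destruct (classic (R2 (path s l) (zs s))) as [acc2|rej2];
    [right|left; exists l; split; [lra|auto]].
  assert (strict2 : ~ R2 (zs s) (path s l)).
  { intro back2. pose proof (path_ltZ s l Hs Hl) as Hlt.
    rewrite (Hcross (path s l)) in Hlt by (split; auto).
    destruct Hlt; lra. }
  destruct (staircase_avoid_above (ys s) (zs s)) with (C := fun x => R2 (zs s) x) (l := l)
    as [l' [Hl' strict2']];
    try solve [lra | auto using closed_lower].
  fold (path s l') in strict2'.
  exists l'. split; [lra|]. split.
  - apply pref_not; auto. apply path_inZ; auto; lra.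
  - intro acc1'. apply (proj2 (path_strict R1 s l l' HR1 Hs ltac:(lra) ltac:(lra))).
    exact (pref_trans _ HR1 _ _ _ acc1' back1).
Qed.

End Homotopy.

(** * The single-crossing order *)

Section Domain.
Variable D : Pref -> Prop.
Hypothesis HD : rich_single_crossing D.

Lemma D_classical Rl : D Rl -> classical Rl.
Proof. apply HD. Qed.

Lemma D_rich x y : inZ x -> inZ y -> ltZ x y -> exists Rl, D Rl /\ Indiff Rl x y.
Proof. apply HD. Qed.

Lemma D_common_indiff R1 R2 x z : D R1 -> D R2 -> R1 <> R2 -> inZ z ->
  Indiff R1 x z -> Indiff R2 x z -> x = z.
Proof.
  intros D1 D2 Hne Hz I1 I2.
  pose proof (D_classical _ D1) as C1. pose proof (D_classical _ D2) as C2.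
  apply (proj1 (proj2 HD) R1 R2 D1 D2 Hne z z Hz Hz x z); auto;
    split; apply pref_refl; auto.
Qed.

(* Otherwise a point slightly worse than [w] would still be [R2]-acceptable
   against [z], hence [R1]-acceptable, contradicting [R1]'s indifference. *)
Lemma prec_indiff_not_pref R1 R2 w z : D R1 -> D R2 -> precD R1 R2 ->
  inZ w -> inZ z -> ltZ w z -> Indiff R1 w z -> ~ R2 w z.
Proof.
  intros D1 D2 [Hne Hprec] Hw Hz Hwz [I1 I2] H2.
  pose proof (D_classical _ D1) as C1. pose proof (D_classical _ D2) as C2.
  destruct (classic (R2 z w)) as [H2'|H2'].
  - assert (w = z) as -> by (apply (D_common_indiff R1 R2); auto; split; auto).
    destruct Hwz; lra.
  - destruct (strict_pref_stable R2 C2 w z (conj H2 H2')) as [e [He Ho]].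
    pose proof (Rmin_l (e / 2) ((fst z - fst w) / 2)).
    pose proof (Rmin_r (e / 2) ((fst z - fst w) / 2)).
    set (d := Rmin (e / 2) ((fst z - fst w) / 2)) in *.
    assert (0 < d) by (apply Rmin_pos; destruct Hwz; lra).
    set (w' := (fst w + d, snd w)).
    assert (Hw' : inZ w') by (unfold w', inZ, ltZ in *; simpl; lra).
    assert (Hw'z : ltZ w' z) by (unfold w', ltZ in *; simpl; lra).
    assert (R2w' : R2 w' z).
    { apply (Ho w' z); auto; [apply close_shift_fst; lra|].
      unfold close; rewrite !Rminus_diag, !Rabs_R0; lra. }
    assert (R1w' : R1 w' z) by (apply Hprec; auto; split; [auto|right; auto]).
    assert (Sw : Pstrict R1 w w').
    { apply dominates_strict; auto; unfold w', dominates; simpl; [lra|].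
      intro E. apply (f_equal fst) in E. simpl in E. lra. }
    exact (proj2 (strict_pref_trans_l _ C1 _ _ _ Sw R1w') I2).
Qed.

Lemma prec_asym R1 R2 : D R1 -> D R2 -> precD R1 R2 -> precD R2 R1 -> False.
Proof.
  intros D1 D2 H12 [_ H21].
  assert (Hz : inZ (1, 1)) by (unfold inZ; simpl; lra).
  assert (Hy : inZ (0, 0)) by (unfold inZ; simpl; lra).
  assert (Hyz : ltZ (0, 0) (1, 1)) by (unfold ltZ; simpl; lra).
  destruct (staircase_indiff (0, 0) (1, 1) Hy Hz Hyz R1 (D_classical _ D1))
    as [l [Hl I]].
  set (w := staircase (0, 0) (1, 1) l) in I.
  assert (Hw : inZ w) by (apply staircase_inZ; auto; lra).
  assert (Hwz : ltZ w (1, 1)) by (apply staircase_ltZ; auto).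
  apply (prec_indiff_not_pref R1 R2 w (1, 1)); auto.
  apply H21; [auto | split; [auto|right; auto] | apply I].
Qed.

Lemma prec_trans R1 R2 R3 : D R1 -> D R2 -> D R3 ->
  precD R1 R2 -> precD R2 R3 -> precD R1 R3.
Proof.
  intros D1 D2 D3 [Hne12 H12] [Hne23 H23]. split.
  - intros ->. exact (prec_asym R3 R2 D3 D2 (conj Hne12 H12) (conj Hne23 H23)).
  - intros z Hz x Hx H. auto.
Qed.

Lemma precsim_trans R1 R2 R3 : D R1 -> D R2 -> D R3 ->
  precsimD R1 R2 -> precsimD R2 R3 -> precsimD R1 R3.
Proof.
  intros D1 D2 D3 [H12|<-] [H23|<-].
  - left. exact (prec_trans R1 R2 R3 D1 D2 D3 H12 H23).
  - left. exact H12.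
  - left. exact H23.
  - right. reflexivity.
Qed.

Lemma not_prec_witness R1 R2 : D R1 -> R1 <> R2 -> ~ precD R1 R2 ->
  exists z y, inZ z /\ inZ y /\ ltZ y z /\ R2 y z /\ ~ R1 y z.
Proof.
  intros D1 Hne Hn. apply NNPP. intro Hw. apply Hn. split; auto.
  intros z Hz x [Hx [<-|Hlt]] H2.
  - apply pref_refl; auto. apply D_classical, D1.
  - apply NNPP. intro H1. apply Hw. exists z, x. auto.
Qed.

(* Deform a witness that [R1] is not below [R2] into a witness that [R2] is
   not below [R1]: the set of parameters where one preference accepts and the
   other rejects is open for each order of the two, the two sets cover by
   single crossing, and they are disjoint, contradicting connectedness. *)
Lemma prec_total R1 R2 : D R1 -> D R2 -> R1 <> R2 -> precD R1 R2 \/ precD R2 R1.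
Proof.
  intros D1 D2 Hne.
  destruct (classic (precD R1 R2)) as [P|P]; [left; auto|].
  destruct (classic (precD R2 R1)) as [Q|Q]; [right; auto|].
  exfalso.
  pose proof (D_classical _ D1) as C1. pose proof (D_classical _ D2) as C2.
  destruct (not_prec_witness R1 R2 D1 Hne P) as [za [ya [Hza [Hya [Ha [A2 A1]]]]]].
  destruct (not_prec_witness R2 R1 D2 (not_eq_sym Hne) Q)
    as [zb [yb [Hzb [Hyb [Hb [B1 B2]]]]]].
  destruct (segment_connected 0 1 (separates ya za yb zb R2 R1) (separates ya za yb zb R1 R2))
    as [s [Hs [U V]]].
  - lra.
  - apply separates_open; auto.
  - apply separates_open; auto.
  - intros s Hs. apply separates_cover; auto.
    intros x I2 I1. apply (D_common_indiff R2 R1); auto. apply plerp_inZ; auto.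
  - apply separates_0; auto.
  - apply separates_1; auto.
  - exact (separates_exclusive ya za yb zb Hya Hza Ha Hyb Hzb Hb R2 R1 s C2 C1 Hs U V).
Qed.

Section Convergence.
Variable Rl : Pref.
Variable Rs : nat -> Pref.
Hypothesis DRl : D Rl.
Hypothesis DRs : forall n, D (Rs n).
Hypothesis Hconv : order_converges D Rs Rl.

(* A domain member indifferent across a slightly perturbed pair lies strictly
   on one side of [Rl] in the order, and the tail of the sequence eventually
   lies on the same side. *)
Lemma strict_pref_eventually w z : Pstrict Rl w z ->
  exists N, forall n, (N <= n)%nat -> Pstrict (Rs n) w z.
Proof.
  intros Hwz. pose proof (D_classical _ DRl) as Cl.
  destruct (pref_inZ Rl Cl _ _ (proj1 Hwz)) as [Hw Hz].
  destruct (strict_pref_stable Rl Cl w z Hwz) as [e [He Ho]].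
  destruct (ltZ_or_dominates w z) as [Hlt|[Hlt|[Hdom|Hdom]]].
  - pose proof (Rmin_l (e / 2) ((fst z - fst w) / 2)).
    pose proof (Rmin_r (e / 2) ((fst z - fst w) / 2)).
    set (d := Rmin (e / 2) ((fst z - fst w) / 2)) in *.
    assert (0 < d) by (apply Rmin_pos; destruct Hlt; lra).
    set (w' := (fst w + d, snd w)).
    assert (Hw' : inZ w') by (unfold w', inZ in *; simpl; lra).
    assert (Hw'z : ltZ w' z) by (unfold w', ltZ in *; simpl; lra).
    assert (Sw'z : Pstrict Rl w' z).
    { apply Ho; auto; [apply close_shift_fst; lra|].
      unfold close; rewrite !Rminus_diag, !Rabs_R0; lra. }
    destruct (D_rich w' z Hw' Hz Hw'z) as [b [Db Ib]].
    assert (Hne : b <> Rl) by (intros ->; exact (proj2 Sw'z (proj2 Ib))).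
    destruct (prec_total b Rl Db DRl Hne) as [P|P].
    + exfalso. exact (prec_indiff_not_pref b Rl w' z Db DRl P Hw' Hz Hw'z Ib (proj1 Sw'z)).
    + destruct (proj2 Hconv b Db P) as [N HN]. exists N. intros n Hn.
      destruct (HN n Hn) as [_ Hprec].
      assert (Sww' : Pstrict (Rs n) w w').
      { apply dominates_strict; auto using D_classical; unfold w', dominates; simpl; [lra|].
        intro E. apply (f_equal fst) in E. simpl in E. lra. }
      apply (strict_pref_trans_l _ (D_classical _ (DRs n)) _ w'); auto.
      apply Hprec; [auto | split; [auto | right; auto] | apply Ib].
  - pose proof (Rmin_l (e / 2) ((snd w - snd z) / 2)).
    pose proof (Rmin_r (e / 2) ((snd w - snd z) / 2)).
    set (d := Rmin (e / 2) ((snd w - snd z) / 2)) in *.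
    assert (0 < d) by (apply Rmin_pos; destruct Hlt; lra).
    set (z' := (fst z, snd z + d)).
    assert (Hz' : inZ z') by (unfold z', inZ, ltZ in *; simpl; lra).
    assert (Hz'w : ltZ z' w) by (unfold z', ltZ in *; simpl; lra).
    assert (Swz' : Pstrict Rl w z').
    { apply Ho; auto; [|apply close_shift_snd; lra].
      unfold close; rewrite !Rminus_diag, !Rabs_R0; lra. }
    destruct (D_rich z' w Hz' Hw Hz'w) as [a [Da Ia]].
    assert (Hne : a <> Rl) by (intros ->; exact (proj2 Swz' (proj1 Ia))).
    destruct (prec_total a Rl Da DRl Hne) as [P|P].
    + destruct (proj1 Hconv a Da P) as [N HN]. exists N. intros n Hn.
      pose proof (D_classical _ (DRs n)) as Cn.
      assert (Sz'z : Pstrict (Rs n) z' z).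
      { apply dominates_strict; auto; unfold z', dominates; simpl; [lra|].
        intro E. apply (f_equal snd) in E. simpl in E. lra. }
      apply (strict_pref_trans_r _ Cn _ z'); auto.
      apply pref_not; auto.
      exact (prec_indiff_not_pref a (Rs n) z' w Da (DRs n) (HN n Hn) Hz' Hw Hz'w Ia).
    + exfalso. destruct P as [_ Hprec]. apply (proj2 Swz').
      apply Hprec; [auto | split; [auto | right; auto] | apply Ia].
  - exists 0%nat. intros n _. apply dominates_strict; auto using D_classical.
    intros ->. exact (proj2 Hwz (proj1 Hwz)).
  - exfalso. exact (proj2 Hwz (dominates_pref Rl Cl z w Hz Hw Hdom)).
Qed.

Lemma increasing_below_limit : (forall n, precsimD (Rs n) (Rs (S n))) ->
  forall n, precsimD (Rs n) Rl.
Proof.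
  intros Hinc n.
  assert (Hchain : forall k, precsimD (Rs n) (Rs (k + n)%nat)).
  { induction k as [|k IH]; [right; reflexivity|].
    apply (precsim_trans _ (Rs (k + n)%nat)); auto. }
  destruct (classic (Rs n = Rl)) as [E|E]; [right; exact E|].
  destruct (prec_total (Rs n) Rl (DRs n) DRl E) as [P|P]; [left; exact P|].
  exfalso. destruct (proj2 Hconv (Rs n) (DRs n) P) as [N HN].
  destruct (Hchain N) as [Q|Q].
  - exact (prec_asym _ _ (DRs n) (DRs _) Q (HN (N + n)%nat ltac:(lia))).
  - apply (proj1 (HN (N + n)%nat ltac:(lia))). rewrite Q. reflexivity.
Qed.

End Convergence.

(** * Strategy-proof mechanisms *)

Section Mechanism.
Variable F : Pref -> pt.
Hypothesis Hmech : mechanism D F.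
Hypothesis HSP : strategy_proof D F.

Lemma sp_outcomes_comparable R1 R2 : D R1 -> D R2 ->
  F R1 = F R2 \/ ltZ (F R1) (F R2) \/ ltZ (F R2) (F R1).
Proof.
  intros D1 D2.
  destruct (classic (F R1 = F R2)) as [E|E]; [left; exact E|right].
  destruct (ltZ_or_dominates (F R1) (F R2)) as [L|[L|[Hdom|Hdom]]]; auto; exfalso.
  - apply (proj2 (dominates_strict R2 (D_classical _ D2) _ _ (Hmech R1 D1) (Hmech R2 D2) Hdom E)).
    apply HSP; auto.
  - apply (proj2 (dominates_strict R1 (D_classical _ D1) _ _ (Hmech R2 D2) (Hmech R1 D1) Hdom
                   (not_eq_sym E))).
    apply HSP; auto.
Qed.

Lemma sp_monotone : monotone D F.
Proof.
  intros R1 R2 D1 D2 H12.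
  destruct (sp_outcomes_comparable R1 R2 D1 D2) as [E|[L|L]]; [left; exact E|right; exact L|].
  exfalso.
  assert (I1 : Indiff R1 (F R2) (F R1)).
  { split; [|apply HSP; auto].
    apply (proj2 H12); auto. split; [auto | right; exact L]. apply HSP; auto. }
  exact (prec_indiff_not_pref R1 R2 _ _ D1 D2 H12 (Hmech R2 D2) (Hmech R1 D1) L I1
           (HSP R2 R1 D2 D1)).
Qed.

Lemma sp_ordered_range : ordered_range D F.
Proof.
  intros x y [R1 [D1 <-]] [R2 [D2 <-]] Hne.
  destruct (sp_outcomes_comparable R1 R2 D1 D2) as [E|L]; [contradiction | exact L].
Qed.

Lemma sp_locally_sp_in_range : locally_sp_in_range D F.
Proof.
  split; [exact sp_ordered_range|].
  intros R1 R2 D1 D2 _. split; apply HSP; auto.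
Qed.

Lemma sp_precsim_le R1 R2 : D R1 -> D R2 -> precsimD R1 R2 ->
  fst (F R1) <= fst (F R2) /\ snd (F R1) <= snd (F R2).
Proof.
  intros D1 D2 [H12|<-]; [|lra].
  destruct (sp_monotone R1 R2 D1 D2 H12) as [->|[L1 L2]]; lra.
Qed.

(* The tail outcomes are eventually weakly dominated by a point [l''] near the
   limit [l]; if [F Rl] were strictly better than [l], it would be strictly
   better than [l''] for the tail preferences too, against strategy-proofness. *)
Lemma sp_limit_indiff Rl Rs l : D Rl -> (forall n, D (Rs n)) ->
  order_converges D Rs Rl -> cv_pt (fun n => F (Rs n)) l -> Indiff Rl l (F Rl).
Proof.
  intros DRl DRs Hconv Hcv.
  pose proof (D_classical _ DRl) as Cl. pose proof (Hmech Rl DRl) as HF.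
  assert (Hge : Rl (F Rl) l).
  { apply (closed_approx _ _ (closed_lower Rl Cl _ HF)). intros e He.
    destruct (Hcv e He) as [N HN]. exists (F (Rs N)). split; [apply HN; lia | apply HSP; auto]. }
  split; [|exact Hge].
  destruct (pref_inZ Rl Cl _ _ Hge) as [_ Hl]. unfold inZ in Hl.
  apply NNPP. intro Hlt.
  destruct (closed_compl_near _ _ (closed_upper Rl Cl _ HF) Hlt) as [e [He Ho]].
  set (l'' := (Rmax 0 (fst l - e / 2), Rmin 1 (snd l + e / 2))).
  pose proof (Rmax_l 0 (fst l - e / 2)). pose proof (Rmax_r 0 (fst l - e / 2)).
  pose proof (Rmin_l 1 (snd l + e / 2)). pose proof (Rmin_r 1 (snd l + e / 2)).
  assert (Rmax 0 (fst l - e / 2) <= fst l) by (apply Rmax_lub; lra).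
  assert (snd l <= Rmin 1 (snd l + e / 2)) by (apply Rmin_glb; lra).
  assert (Hl'' : inZ l'') by (unfold l'', inZ; simpl; lra).
  assert (Hrej : ~ Rl l'' (F Rl)).
  { apply Ho. unfold close, l''; simpl.
    split; [rewrite Rabs_left1 | rewrite Rabs_pos_eq]; lra. }
  assert (Sl'' : Pstrict Rl (F Rl) l'') by (split; [apply pref_not|]; auto).
  destruct (strict_pref_eventually Rl Rs DRl DRs Hconv _ _ Sl'') as [N1 HN1].
  destruct (Hcv (e / 2) ltac:(lra)) as [N2 HN2].
  set (n := max N1 N2).
  pose proof (Hmech _ (DRs n)) as HFn.
  destruct (HN2 n ltac:(lia)) as [C1 C2].
  apply Rabs_def2 in C1, C2.
  assert (Hdom : Rs n l'' (F (Rs n))).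
  { apply dominates_pref; auto using D_classical. unfold dominates, l'', inZ in *; simpl.
    split; [apply Rmax_lub | apply Rmin_glb]; lra. }
  apply (proj2 (strict_pref_trans_l _ (D_classical _ (DRs n)) _ _ _ (HN1 n ltac:(lia)) Hdom)).
  apply HSP; auto.
Qed.

Lemma sp_outcomes_converge Rl Rs : D Rl -> (forall n, D (Rs n)) ->
  monotone_seq Rs -> order_converges D Rs Rl -> exists l, cv_pt (fun n => F (Rs n)) l.
Proof.
  intros DRl DRs Hmon Hconv.
  set (u := fun n => fst (F (Rs n))). set (v := fun n => snd (F (Rs n))).
  assert (HZ : forall n, 0 <= u n /\ 0 <= v n <= 1) by (intro n; apply (Hmech _ (DRs n))).
  destruct Hmon as [Hinc|Hdec].
  - assert (Hstep : forall n, u n <= u (S n) /\ v n <= v (S n))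
      by (intro n; apply sp_precsim_le; auto).
    pose proof (increasing_below_limit Rl Rs DRl DRs Hconv Hinc) as Hbelow.
    destruct (growing_cv u) as [l1 Hu]; [intro n; apply Hstep|
      exists (fst (F Rl)); intros r [n ->]; apply (sp_precsim_le _ _ (DRs n) DRl (Hbelow n))|].
    destruct (growing_cv v) as [l2 Hv]; [intro n; apply Hstep|
      exists 1; intros r [n ->]; apply HZ|].
    exists (l1, l2). apply cv_pt_of_coords; assumption.
  - assert (Hstep : forall n, u (S n) <= u n /\ v (S n) <= v n)
      by (intro n; apply sp_precsim_le; auto).
    destruct (decreasing_cv u) as [l1 Hu]; [intro n; apply Hstep|
      exists 0; intros r [n ->]; unfold opp_seq; pose proof (HZ n); lra|].
    destruct (decreasing_cv v) as [l2 Hv]; [intro n; apply Hstep|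
      exists 0; intros r [n ->]; unfold opp_seq; pose proof (HZ n); lra|].
    exists (l1, l2). apply cv_pt_of_coords; assumption.
Qed.

Lemma sp_VF_continuous : VF_continuous D F.
Proof.
  intros Rl DRl Rs DRs Hmon Hconv.
  destruct (sp_outcomes_converge Rl Rs DRl DRs Hmon Hconv) as [l Hl].
  exists l. split; [apply cv_pt_filterlim, Hl|].
  exact (sp_limit_indiff Rl Rs l DRl DRs Hconv Hl).
Qed.

End Mechanism.

End Domain.

Theorem mainTheorem7 (D : Pref -> Prop) (F : Pref -> pt) :
  rich_single_crossing D ->
  mechanism D F ->
  strategy_proof D F ->
  monotone D F /\ VF_continuous D F /\ locally_sp_in_range D F.
Proof.
  intros HD Hmech HSP.
  split; [|split].
  - exact (sp_monotone D HD F Hmech HSP).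
  - exact (sp_VF_continuous D HD F Hmech HSP).
  - exact (sp_locally_sp_in_range D HD F Hmech HSP).
Qed.
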